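(* Let $\mathcal{U}$ be a strict Fraïssé class, let $\mathbf{T}\in\overline{\mathcal{U}}$, and let $\mathcal{C}\subseteq\mathcal{U}$ be a Fraïssé class that is free in $\mathcal{U}$. Then there exists a universal homogeneous homomorphism $u:\mathbf{U}\to\mathbf{T}$ within $\overline{\mathcal{C}}$. Moreover, if $\hat u:\hat{\mathbf{U}}\to\mathbf{T}$ is another universal homogeneous homomorphism to $\mathbf{T}$ within $\overline{\mathcal{C}}$, then there is an isomorphism $h:\hat{\mathbf{U}}\to\mathbf{U}$ with $\hat u=u\circ h$.
   Context: Structures are first-order structures over a signature with arbitrarily many relation symbols and countably many function and constant symbols; an embedding is an injective homomorphism that also reflects all relations. An age is a class of finitely generated structures of one signature with countably many isomorphism types, closed under (isomorphic copies of) finitely generated substructures, and with the joint embedding property (any two members embed into a common member). For an age $\mathcal{C}$, $\overline{\mathcal{C}}$ is the class of all countable structures all of whose finitely generated substructures are isomorphic to members of $\mathcal{C}$. A Fraïssé class is an age with the amalgamation property (for embeddings $f_i:\mathbf{A}\hookrightarrow\mathbf{B}_i$ in $\mathcal{C}$ there are $\mathbf{C}\in\mathcal{C}$ and embeddings $g_i:\mathbf{B}_i\hookrightarrow\mathbf{C}$ with $g_1f_1=g_2f_2$). A Fraïssé class $\mathcal{U}$ is strict if for all $\mathbf{A},\mathbf{B}_1,\mathbf{B}_2\in\mathcal{U}$ and embeddings $f_i:\mathbf{A}\hookrightarrow\mathbf{B}_i$ there are $\mathbf{C}\in\mathcal{U}$ and homomorphisms $g_i:\mathbf{B}_i\to\mathbf{C}$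 such that $(\mathbf{C},(g_1,g_2))$ is a pushout of $f_1,f_2$ in the category of structures in $\overline{\mathcal{U}}$ with all homomorphisms (such a pushout is called the canonical amalgam). A Fraïssé class $\mathcal{C}\subseteq\mathcal{U}$ is free in $\mathcal{U}$ if it is closed under these canonical amalgams in $\mathcal{U}$. For $\mathbf{U}\in\overline{\mathcal{C}}$ and a countable structure $\mathbf{T}$, a homomorphism $u:\mathbf{U}\to\mathbf{T}$ is universal within $\overline{\mathcal{C}}$ if for every $\mathbf{A}\in\overline{\mathcal{C}}$ and homomorphism $h:\mathbf{A}\to\mathbf{T}$ there is an embedding $\iota:\mathbf{A}\hookrightarrow\mathbf{U}$ with $h=u\circ\iota$; it is homogeneous if for every finitely generated substructure $\mathbf{A}\le\mathbf{U}$ and every embedding $\iota:\mathbf{A}\hookrightarrow\mathbf{U}$ with $u\circ\iota=u\restriction_A$ there is an automorphism $\alpha$ of $\mathbf{U}$ with $u\circ\alpha=u$ and $\alpha\restriction_A=\iota$. *)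

From mathcomp Require Import ssreflect ssrfun ssrbool eqtype ssrnat fintype.
Set Implicit Arguments. Unset Strict Implicit. Unset Printing Implicit Defensive.

(* A first-order signature: arbitrarily many relation symbols, countably many
   function symbols (constants = 0-ary function symbols). *)
Record Signature := {
  RelSym : Type;
  FunSym : Type;
  rel_ar : RelSym -> nat;
  fun_ar : FunSym -> nat;
  funsym_countable : exists c : FunSym -> nat, injective c }.

Record Structure (L : Signature) := {
  carrier :> Type;
  srel : forall r : RelSym L, ('I_(rel_ar r) -> carrier) -> Prop;
  sfun : forall f : FunSym L, ('I_(fun_ar f) -> carrier) -> carrier }.

Arguments srel {L} s r _.
Arguments sfun {L} s f _.

Section FO.
Context {L : Signature}.

Definition is_hom (A B : Structure L) (h : A -> B) : Prop :=
  (forall f xs, h (sfun A f xs) = sfun B f (fun i => h (xs i))) /\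
  (forall r xs, srel A r xs -> srel B r (fun i => h (xs i))).

Definition is_emb (A B : Structure L) (h : A -> B) : Prop :=
  is_hom h /\ injective h /\
  (forall r xs, srel B r (fun i => h (xs i)) -> srel A r xs).

Definition is_iso (A B : Structure L) (h : A -> B) : Prop :=
  is_emb h /\ (forall y, exists x, h x = y).

Definition isomorphic (A B : Structure L) : Prop := exists h : A -> B, is_iso h.

Definition countable (A : Structure L) : Prop := exists c : A -> nat, injective c.

Definition closed (A : Structure L) (P : A -> Prop) : Prop :=
  forall f (xs : 'I_(fun_ar f) -> A), (forall i, P (xs i)) -> P (sfun A f xs).

Definition sub_struct (A : Structure L) (P : A -> Prop) (HP : closed P)
  : Structure L :=
  {| carrier := {x : A | P x};
     srel := fun r xs => srel A r (fun i => proj1_sig (xs i));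
     sfun := fun f xs => exist P (sfun A f (fun i => proj1_sig (xs i)))
                              (HP f _ (fun i => proj2_sig (xs i))) |}.

Definition gen (A : Structure L) (n : nat) (g : 'I_n -> A) (x : A) : Prop :=
  forall P : A -> Prop, closed P -> (forall i, P (g i)) -> P x.

Lemma gen_closed (A : Structure L) (n : nat) (g : 'I_n -> A) : closed (gen g).
Proof.
  intros f xs H P HP Hg. apply HP. intros i. exact (H i P HP Hg).
Qed.

Definition fg_sub (A : Structure L) (n : nat) (g : 'I_n -> A) : Structure L :=
  @sub_struct A (gen g) (@gen_closed A n g).

Definition fingen (A : Structure L) : Prop :=
  exists n (g : 'I_n -> A), forall x, gen g x.

Definition Class := Structure L -> Prop.

Definition age (K : Class) : Prop :=
  (exists A, K A) /\
  (forall A, K A -> fingen A) /\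
  (exists S : nat -> Structure L, forall A, K A -> exists n, isomorphic A (S n)) /\
  (forall A B, K A -> fingen B -> (exists e : B -> A, is_emb e) -> K B) /\
  (forall A B, K A -> K B ->
     exists D, K D /\ (exists e : A -> D, is_emb e) /\ (exists e : B -> D, is_emb e)).

Definition amalgamation (K : Class) : Prop :=
  forall (A B1 B2 : Structure L) (f1 : A -> B1) (f2 : A -> B2),
    K A -> K B1 -> K B2 -> is_emb f1 -> is_emb f2 ->
    exists (D : Structure L) (g1 : B1 -> D) (g2 : B2 -> D),
      K D /\ is_emb g1 /\ is_emb g2 /\ (forall a, g1 (f1 a) = g2 (f2 a)).

Definition fraisse (K : Class) : Prop := age K /\ amalgamation K.

Definition Kbar (K : Class) : Class := fun A =>
  countable A /\
  forall n (g : 'I_n -> A), exists B, K B /\ isomorphic (fg_sub g) B.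

Definition is_pushout (K : Class) (A B1 B2 C : Structure L)
    (f1 : A -> B1) (f2 : A -> B2) (g1 : B1 -> C) (g2 : B2 -> C) : Prop :=
  Kbar K A /\ Kbar K B1 /\ Kbar K B2 /\ Kbar K C /\
  is_hom f1 /\ is_hom f2 /\ is_hom g1 /\ is_hom g2 /\
  (forall a, g1 (f1 a) = g2 (f2 a)) /\
  (forall (D : Structure L) (k1 : B1 -> D) (k2 : B2 -> D),
     Kbar K D -> is_hom k1 -> is_hom k2 -> (forall a, k1 (f1 a) = k2 (f2 a)) ->
     exists m : C -> D, is_hom m /\ (forall b, m (g1 b) = k1 b) /\
       (forall b, m (g2 b) = k2 b) /\
       (forall m' : C -> D, is_hom m' -> (forall b, m' (g1 b) = k1 b) ->
          (forall b, m' (g2 b) = k2 b) -> forall c, m' c = m c)).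

Definition strict (U : Class) : Prop :=
  fraisse U /\
  forall (A B1 B2 : Structure L) (f1 : A -> B1) (f2 : A -> B2),
    U A -> U B1 -> U B2 -> is_emb f1 -> is_emb f2 ->
    exists (C : Structure L) (g1 : B1 -> C) (g2 : B2 -> C),
      U C /\ is_pushout U f1 f2 g1 g2.

Definition free_in (C U : Class) : Prop :=
  forall (A B1 B2 D : Structure L) (f1 : A -> B1) (f2 : A -> B2)
         (g1 : B1 -> D) (g2 : B2 -> D),
    C A -> C B1 -> C B2 -> is_emb f1 -> is_emb f2 ->
    U D -> is_pushout U f1 f2 g1 g2 -> C D.

Definition universal_within (K : Class) (U T : Structure L) (u : U -> T) : Prop :=
  forall (A : Structure L) (h : A -> T), Kbar K A -> is_hom h ->
    exists i : A -> U, is_emb i /\ (forall a, h a = u (i a)).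

Definition homogeneous_hom (U T : Structure L) (u : U -> T) : Prop :=
  forall n (g : 'I_n -> U) (i : fg_sub g -> U),
    is_emb i -> (forall a, u (i a) = u (proj1_sig a)) ->
    exists alpha : U -> U, is_iso alpha /\ (forall x, u (alpha x) = u x) /\
      (forall a, alpha (proj1_sig a) = i a).

End FO.

From mathcomp Require Import ssreflect ssrfun ssrbool eqtype ssrnat seq choice fintype bigop.
From Stdlib Require Import Cantor Lia.
From Stdlib Require Import Classical IndefiniteDescription.
From Stdlib Require Import FunctionalExtensionality ProofIrrelevance.
Set Implicit Arguments. Unset Strict Implicit. Unset Printing Implicit Defensive.

(* A homomorphism u : U -> T has the extension property (EP) within the age C
   if every commuting square
        A --f--> B          (A, B in C, f an embedding)
        |e       |hB
        U --u--> T          (e an embedding, u o e = hB o f)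
   can be completed by an embedding e' : B -> U with e' o f = e, u o e' = hB.

   1. A back-and-forth argument shows that an EP homomorphism from a structure
      of \overline{C} is universal and homogeneous, that universal homogeneous
      homomorphisms have the EP, and that two EP homomorphisms are isomorphic
      over T.  This gives homogeneity, universality and uniqueness.
   2. Existence: since U is strict and C is free in U, two maps from members
      of C to T that agree on a common substructure amalgamate inside C
      compatibly with T (canonical amalgam + pushout property).  Realising
      structures on subsets of nat, we build an increasing chain of members of
      C over T in which every extension task is eventually solved (tasks are
      enumerated by a Cantor schedule); the union of the chain has the EP. *)

Definition decide (P : Prop) : {P} + {~ P}.
Proof.
  have H : exists b : bool, if b then P else ~ P.
    by case: (classic P) => H; [exists true | exists false].
  case: (constructive_indefinite_description _ H) => [[] Hb]; [left|right]; exact Hb.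
Defined.

Lemma choice_fun (X Y : Type) (R : X -> Y -> Prop) :
  (forall x, exists y, R x y) -> exists f : X -> Y, forall x, R x (f x).
Proof.
  move=> H. exists (fun x => proj1_sig (constructive_indefinite_description _ (H x))).
  move=> x. exact: proj2_sig (constructive_indefinite_description _ (H x)).
Qed.

Lemma proj1_sig_inj (A : Type) (P : A -> Prop) (x y : {a | P a}) :
  proj1_sig x = proj1_sig y -> x = y.
Proof. case: x => a Ha; case: y => b Hb /= E. subst b. by rewrite (proof_irrelevance _ Ha Hb). Qed.

Lemma eventually_all (n : nat) (P : nat -> 'I_n -> Prop) :
  (forall k k' i, k <= k' -> P k i -> P k' i) ->
  (forall i, exists k, P k i) -> forall m, exists k, m <= k /\ forall i, P k i.
Proof.
  move=> Hmono H m. case: (choice_fun H) => kf Hk.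
  exists (maxn m (\max_(i < n) kf i)); split; first exact: leq_maxl.
  move=> i. apply: Hmono (Hk i). apply: leq_trans (leq_maxr _ _).
  exact: (@leq_bigmax _ (fun i => kf i)).
Qed.

Lemma choice_seq (X : Type) (R : nat -> X -> X -> Prop) (x0 : X) :
  (forall k x, exists y, R k x y) -> exists s : nat -> X, s 0 = x0 /\ forall k, R k (s k) (s k.+1).
Proof.
  move=> H. have H' : forall p : nat * X, exists y, R p.1 p.2 y by move=> [k x]; exact: H.
  case: (choice_fun H') => F HF.
  exists (fix s k := match k with 0 => x0 | k'.+1 => F (k', s k') end); split => // k.
  exact: (HF (k, _)).
Qed.

Section Morphisms.
Context {L : Signature}.
Implicit Types A B C D : Structure L.

Lemma hom_comp A B C (f : A -> B) (g : B -> C) :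
  is_hom f -> is_hom g -> is_hom (fun x => g (f x)).
Proof.
  move=> [Hf1 Hf2] [Hg1 Hg2]; split.
  - move=> fs xs. by rewrite Hf1 Hg1.
  - move=> r xs H. exact: Hg2 (Hf2 _ _ H).
Qed.

Lemma emb_comp A B C (f : A -> B) (g : B -> C) :
  is_emb f -> is_emb g -> is_emb (fun x => g (f x)).
Proof.
  move=> [Hf [If Rf]] [Hg [Ig Rg]]; split; first exact: hom_comp.
  split; first by move=> x y /Ig /If.
  move=> r xs H. apply: Rf. exact: Rg H.
Qed.

Lemma iso_id A : is_iso (fun x : A => x).
Proof. by split; [split; [split| split]| move=> y; exists y]. Qed.

Lemma iso_emb A B (f : A -> B) : is_iso f -> is_emb f.
Proof. by case. Qed.

Lemma iso_inv A B (f : A -> B) : is_iso f ->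
  exists g : B -> A, is_iso g /\ (forall x, g (f x) = x) /\ (forall y, f (g y) = y).
Proof.
  move=> [[[Hf1 Hf2] [If Rf]] Sf]. case: (choice_fun Sf) => g fg.
  have gf : forall x, g (f x) = x by move=> x; apply: If; rewrite fg.
  have fgE : forall n (ys : 'I_n -> B), (fun i => f (g (ys i))) = ys.
    by move=> n ys; apply: functional_extensionality => i; rewrite fg.
  exists g; split; last by split.
  split; last by move=> x; exists (f x).
  split; [split|split].
  - move=> fs ys. apply: If. by rewrite fg Hf1 fgE.
  - move=> r ys H. apply: Rf. by rewrite fgE.
  - by move=> x y E; rewrite -(fg x) -(fg y) E.
  - move=> r ys H. by have := Hf2 _ _ H; rewrite fgE.
Qed.

Lemma hom_of_emb_comp A B D (m : A -> B) (psi : B -> D) (e : A -> D) :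
  is_emb psi -> is_hom e -> (forall x, psi (m x) = e x) -> is_hom m.
Proof.
  move=> [[Hp1 Hp2] [Ip Rp]] [He1 He2] E.
  have Ef : forall n (xs : 'I_n -> A), (fun i => psi (m (xs i))) = (fun i => e (xs i)).
    by move=> n xs; apply: functional_extensionality => i; rewrite E.
  split.
  - move=> f xs. apply: Ip. by rewrite E He1 Hp1 Ef.
  - move=> r xs H. apply: Rp. rewrite Ef. exact: He2.
Qed.

Lemma emb_of_comp A B D (g : A -> B) (m : B -> D) (k : A -> D) :
  is_hom g -> is_hom m -> is_emb k -> (forall x, m (g x) = k x) -> is_emb g.
Proof.
  move=> Hg [_ Hm] [_ [Ik Rk]] E; split; first done. split.
  - move=> x y Hxy. apply: Ik. by rewrite -!E Hxy.
  - move=> r xs H. apply: Rk. have := Hm _ _ H.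
    by have -> : (fun i => m (g (xs i))) = (fun i => k (xs i))
      by apply: functional_extensionality => i; rewrite E.
Qed.

Lemma emb_factor A B D (psi : B -> D) (e : A -> D) :
  is_emb psi -> is_emb e -> (forall x, exists y, psi y = e x) ->
  exists m : A -> B, is_emb m /\ (forall x, psi (m x) = e x).
Proof.
  move=> Hpsi He H. case: (choice_fun H) => m Hm.
  have Hhm : is_hom m := hom_of_emb_comp Hpsi (proj1 He) Hm.
  exists m; split; last done. exact: emb_of_comp Hhm (proj1 Hpsi) He Hm.
Qed.

End Morphisms.

Section Generated.
Context {L : Signature}.
Implicit Types A B C D : Structure L.

Lemma gen_base A n (g : 'I_n -> A) i : gen g (g i).
Proof. by move=> P _ H. Qed.

Lemma gen_hom_image A B (h : A -> B) n (g : 'I_n -> A) x :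
  is_hom h -> gen g x -> gen (fun i => h (g i)) (h x).
Proof.
  move=> [H1 _] Hx. apply: (Hx (fun x => gen (fun i => h (g i)) (h x))).
  - move=> fs xs Hxs. rewrite H1. exact: gen_closed.
  - by move=> i P _ HP; apply: HP.
Qed.

Lemma gen_preimage A B (h : A -> B) n (g : 'I_n -> A) y :
  is_hom h -> gen (fun i => h (g i)) y -> exists x, gen g x /\ h x = y.
Proof.
  move=> [H1 _] Hy. apply: (Hy (fun y => exists x, gen g x /\ h x = y)).
  - move=> fs ys Hys. case: (choice_fun Hys) => xs Hxs.
    exists (sfun A fs xs); split.
    + apply: gen_closed => i. by case: (Hxs i).
    + rewrite H1. congr (sfun _ _ _). apply: functional_extensionality => i. by case: (Hxs i).
  - move=> i. by exists (g i); split; [exact: gen_base|].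
Qed.

(* The image of a homomorphism is closed, so it contains everything generated
   by elements of the image. *)
Lemma gen_in_image A B (h : A -> B) n (g : 'I_n -> B) y : is_hom h ->
  (forall i, exists x, h x = g i) -> gen g y -> exists x, h x = y.
Proof.
  move=> [H1 _] Hg Hy. apply: (Hy (fun y => exists x, h x = y)) Hg => f ws Hws.
  case: (choice_fun Hws) => xs Hxs.
  exists (sfun A f xs). rewrite H1. congr (sfun _ _ _). exact: functional_extensionality.
Qed.

Lemma hom_agree_gen A B (h1 h2 : A -> B) n (g : 'I_n -> A) :
  is_hom h1 -> is_hom h2 -> (forall i, h1 (g i) = h2 (g i)) -> forall x, gen g x -> h1 x = h2 x.
Proof.
  move=> [H1 _] [H2 _] Hg x Hx. apply: (Hx (fun x => h1 x = h2 x)); last done.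
  move=> fs xs Hxs. rewrite H1 H2. congr (sfun _ _ _). exact: functional_extensionality.
Qed.

Lemma gen_mono A n m (g : 'I_n -> A) (g' : 'I_m -> A) :
  (forall i, gen g' (g i)) -> forall x, gen g x -> gen g' x.
Proof. move=> H x Hx. exact: Hx (@gen_closed _ _ _ g') H. Qed.

(* The substructure generated by no elements (the one generated by the
   constants). *)
Definition no_gens (A : Type) : 'I_0 -> A :=
  fun i => False_rect _ (Bool.diff_false_true (ltn_ord i)).

Lemma gen_no_gens A (g g' : 'I_0 -> A) x : gen g x -> gen g' x.
Proof. apply: gen_mono => i. by case: i. Qed.

Definition elt A n (g : 'I_n -> A) (i : 'I_n) : fg_sub g := exist _ (g i) (@gen_base _ _ g i).

Lemma val_emb A (P : A -> Prop) (HP : closed P) : is_emb (fun x : sub_struct HP => proj1_sig x).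
Proof. split; [split|split] => //. move=> x y. exact: proj1_sig_inj. Qed.

Lemma fg_sub_gen A n (g : 'I_n -> A) (y : fg_sub g) : gen (elt g) y.
Proof.
  have Hy : gen (fun i => proj1_sig (elt g i)) (proj1_sig y) := proj2_sig y.
  case: (gen_preimage (proj1 (val_emb (@gen_closed _ _ _ g))) Hy) => x [Hx E].
  by rewrite -(proj1_sig_inj E).
Qed.

Lemma fingen_fg A n (g : 'I_n -> A) : fingen (fg_sub g).
Proof. exists n, (elt g). exact: fg_sub_gen. Qed.

Lemma hom_agree_fg A B n (g : 'I_n -> A) (h1 h2 : fg_sub g -> B) :
  is_hom h1 -> is_hom h2 -> (forall i, h1 (elt g i) = h2 (elt g i)) -> forall x, h1 x = h2 x.
Proof. move=> H1 H2 E x. apply: (hom_agree_gen H1 H2 E). exact: fg_sub_gen. Qed.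

(* Any two embeddings of substructures generated by constants into a common
   structure have the same image, hence factor through each other. *)
Lemma const_sub_factor A B D (e1 : fg_sub (no_gens A) -> D) (e2 : fg_sub (no_gens B) -> D) :
  is_emb e1 -> is_emb e2 ->
  exists m : fg_sub (no_gens A) -> fg_sub (no_gens B), is_emb m /\ forall x, e2 (m x) = e1 x.
Proof.
  move=> He1 He2. apply: (emb_factor He2 He1) => x.
  have H1 := gen_hom_image (proj1 He1) (fg_sub_gen x).
  have H2 : gen (fun i => e2 (elt (no_gens B) i)) (e1 x) by apply: gen_no_gens H1.
  case: (gen_preimage (proj1 He2) H2) => y [_ <-]. by exists y.
Qed.

Definition incl A (P Q : A -> Prop) (HP : closed P) (HQ : closed Q)
  (H : forall x, P x -> Q x) : sub_struct HP -> sub_struct HQ :=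
  fun a => exist _ (proj1_sig a) (H _ (proj2_sig a)).

Lemma incl_emb A (P Q : A -> Prop) (HP : closed P) (HQ : closed Q) H :
  is_emb (@incl A P Q HP HQ H).
Proof.
  split; [split|split] => //.
  - move=> f xs. exact: proj1_sig_inj.
  - move=> x y E. apply: proj1_sig_inj. exact: (f_equal (@proj1_sig _ _) E).
Qed.

End Generated.

Definition ext (A : Type) n (g : 'I_n -> A) (x : A) : 'I_n.+1 -> A :=
  fun i => match unlift ord_max i with Some j => g j | None => x end.

Lemma ext_lift (A : Type) n (g : 'I_n -> A) x j : ext g x (lift ord_max j) = g j.
Proof. by rewrite /ext liftK. Qed.

Lemma ext_max (A : Type) n (g : 'I_n -> A) x : ext g x ord_max = x.
Proof. by rewrite /ext unlift_none. Qed.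

Lemma gen_ext {L : Signature} (A : Structure L) n (g : 'I_n -> A) x y :
  gen g y -> gen (ext g x) y.
Proof. apply: gen_mono => i. rewrite -(ext_lift g x). exact: gen_base. Qed.

(* Finitely generated structures are countable: each element is the value of
   a term in the generators, and terms over a countable signature are coded
   injectively by mathcomp's generic countable trees. *)
Section Terms.
Context {L : Signature}.

Inductive term (n : nat) : Type :=
| tvar : 'I_n -> term n
| tapp : forall f : FunSym L, ('I_(fun_ar f) -> term n) -> term n.

Fixpoint eval (A : Structure L) n (g : 'I_n -> A) (t : term n) : A :=
  match t with
  | tvar i => g i
  | tapp f args => sfun A f (fun j => eval g (args j))
  end.

Definition funsym_code : FunSym L -> nat :=
  proj1_sig (constructive_indefinite_description _ (funsym_countable L)).

Lemma funsym_code_inj : injective funsym_code.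
Proof. exact: proj2_sig (constructive_indefinite_description _ (funsym_countable L)). Qed.

Fixpoint term_code n (t : term n) : GenTree.tree nat :=
  match t with
  | tvar i => GenTree.Leaf (nat_of_ord i)
  | tapp f args =>
      GenTree.Node (funsym_code f) [seq term_code (args j) | j <- enum 'I_(fun_ar f)]
  end.

Lemma term_code_inj n : injective (@term_code n).
Proof.
  elim=> [i|f args IH] [i'|f' args'] //=.
  - by move=> [] /val_inj ->.
  - move=> [] /funsym_code_inj E. subst f'. move/eq_in_map => H.
    have -> : args = args'; last done.
    apply: functional_extensionality => j. apply: IH. apply: H. by rewrite mem_enum.
Qed.

Lemma gen_term (A : Structure L) n (g : 'I_n -> A) x : gen g x -> exists t, eval g t = x.
Proof.
  move=> Hx. apply: (Hx (fun x => exists t, eval g t = x)).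
  - move=> f xs H. case: (choice_fun H) => ts Hts. exists (tapp ts) => /=.
    congr (sfun _ _ _). exact: functional_extensionality.
  - move=> i. by exists (tvar i).
Qed.

Lemma fingen_countable (A : Structure L) : fingen A -> countable A.
Proof.
  move=> [n [g Hg]].
  have [t Ht] : exists t : A -> term n, forall x, eval g (t x) = x.
    by apply: (@choice_fun A (term n) (fun x t => eval g t = x)) => x; apply: gen_term.
  exists (fun x => pickle (term_code (t x))) => x y /(pcan_inj pickleK) /term_code_inj E.
  by rewrite -(Ht x) -(Ht y) E.
Qed.

End Terms.

Section Ages.
Context {L : Signature} (K : @Class L).
Hypothesis HK : age K.
Implicit Types A B : Structure L.

Lemma age_fingen A : K A -> fingen A.
Proof. by case: HK => _ [H _]; apply: H. Qed.

Lemma age_emb A B (e : B -> A) : K A -> fingen B -> is_emb e -> K B.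
Proof. case: HK => _ [_ [_ [H _]]] HA HB He. apply: H HA HB _. by exists e. Qed.

Lemma age_fg_sub A n (g : 'I_n -> A) : K A -> K (fg_sub g).
Proof. move=> HA. exact: age_emb HA (fingen_fg g) (val_emb _). Qed.

Lemma age_iso A B (phi : A -> B) : K A -> is_iso phi -> K B.
Proof.
  move=> HA Hphi. case: (iso_inv Hphi) => psi [Hpsi _].
  apply: (age_emb HA _ (iso_emb Hpsi)).
  case: (age_fingen HA) => n [g Hg]. exists n, (fun i => phi (g i)) => y.
  case: Hphi => [[Hh _] Sphi]. case: (Sphi y) => x <-. exact: gen_hom_image.
Qed.

Lemma age_Kbar A : K A -> Kbar K A.
Proof.
  move=> HA; split; first exact: fingen_countable (age_fingen HA).
  move=> n g. exists (fg_sub g); split; first exact: age_fg_sub.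
  exists id. exact: iso_id.
Qed.

Lemma Kbar_fg A n (g : 'I_n -> A) : Kbar K A -> K (fg_sub g).
Proof.
  move=> [_ H]. case: (H n g) => B [HB [phi Hphi]].
  exact: age_emb HB (fingen_fg g) (iso_emb Hphi).
Qed.

End Ages.

Section BackAndForth.
Context {L : Signature} (Ccl : @Class L) (T : Structure L).
Hypothesis HCage : age Ccl.
Implicit Types A B : Structure L.

Definition has_EP (V : Structure L) (v : V -> T) :=
  forall A B (f : A -> B) (hB : B -> T) (e : A -> V),
    Ccl A -> Ccl B -> is_emb f -> is_hom hB -> is_emb e -> (forall a, v (e a) = hB (f a)) ->
    exists e' : B -> V, is_emb e' /\ (forall a, e' (f a) = e a) /\ (forall b, v (e' b) = hB b).

Definition partial_iso (U1 U2 : Structure L) (u1 : U1 -> T) (u2 : U2 -> T)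
    n (g1 : 'I_n -> U1) (g2 : 'I_n -> U2) :=
  exists phi : fg_sub g1 -> U2, is_emb phi /\ (forall a, u2 (phi a) = u1 (proj1_sig a)) /\
    (forall i, phi (elt g1 i) = g2 i).

Lemma partial_iso_sym (U1 U2 : Structure L) (u1 : U1 -> T) (u2 : U2 -> T) n
    (g1 : 'I_n -> U1) g2 :
  partial_iso u1 u2 g1 g2 -> partial_iso u2 u1 g2 g1.
Proof.
  move=> [phi [Hphi [Hu Hg]]].
  have Himg : forall y : fg_sub g2, exists x, phi x = proj1_sig y.
    move=> y. have Hy : gen (fun i => phi (elt g1 i)) (proj1_sig y).
      have -> : (fun i => phi (elt g1 i)) = g2 by apply: functional_extensionality.
      exact: (proj2_sig y).
    case: (gen_preimage (proj1 Hphi) Hy) => x [_ E]. by exists x.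
  case: (emb_factor Hphi (val_emb _) Himg) => m [Hm Em].
  exists (fun y => proj1_sig (m y)); split; first exact: emb_comp Hm (val_emb _).
  split => [a|i]; first by rewrite -Hu Em.
  have -> // : m (elt g2 i) = elt g1 i by apply: (proj1 (proj2 Hphi)); rewrite Em Hg.
Qed.

Lemma partial_iso_forth (U1 U2 : Structure L) (u1 : U1 -> T) (u2 : U2 -> T) n
    (g1 : 'I_n -> U1) g2 :
  has_EP u2 -> Kbar Ccl U1 -> is_hom u1 -> partial_iso u1 u2 g1 g2 ->
  forall x, exists y, partial_iso u1 u2 (ext g1 x) (ext g2 y).
Proof.
  move=> HEP HU1 Hu1 [phi [Hphi [Hu Hg]]] x.
  pose f := @incl _ U1 _ _ (@gen_closed _ _ _ g1) (@gen_closed _ _ _ (ext g1 x))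
    (@gen_ext _ _ _ g1 x).
  case: (HEP _ _ f (fun b => u1 (proj1_sig b)) phi (Kbar_fg HCage _ HU1) (Kbar_fg HCage _ HU1)
     (incl_emb _ _ _) (hom_comp (proj1 (val_emb _)) Hu1) Hphi Hu) => e' [He' [Hf' Hu']].
  exists (e' (elt (ext g1 x) ord_max)), e'; do 2!split => //.
  move=> i. case: (unliftP ord_max i) => [j ->|->]; last by rewrite ext_max.
  rewrite ext_lift -Hg -Hf'. congr e'. apply: proj1_sig_inj => /=. by rewrite ext_lift.
Qed.

(* Finite approximations of the isomorphism built by back and forth. *)
Record Approx (U1 U2 : Structure L) :=
  { alen : nat; aleft : 'I_alen -> U1; aright : 'I_alen -> U2 }.
Arguments aleft {U1 U2} a _.
Arguments aright {U1 U2} a _.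

Section Approximations.
Variables (U1 U2 : Structure L) (u1 : U1 -> T) (u2 : U2 -> T).
Hypotheses (HU1 : Kbar Ccl U1) (HU2 : Kbar Ccl U2) (Hu1 : is_hom u1) (Hu2 : is_hom u2).

Definition approx_ok (a : Approx U1 U2) := partial_iso u1 u2 (aleft a) (aright a).
Definition paired (a : Approx U1 U2) x y := exists i, aleft a i = x /\ aright a i = y.
Definition refines (a a' : Approx U1 U2) := forall x y, paired a x y -> paired a' x y.

Definition approx_add (a : Approx U1 U2) x y : Approx U1 U2 :=
  {| aleft := ext (aleft a) x; aright := ext (aright a) y |}.

Lemma refines_add a x y : refines a (approx_add a x y).
Proof. move=> ? ? [i [<- <-]]. exists (lift ord_max i) => /=. by rewrite !ext_lift. Qed.

Lemma paired_add a x y : paired (approx_add a x y) x y.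
Proof. exists ord_max => /=. by rewrite !ext_max. Qed.

Lemma paired_fun a x y y' : approx_ok a -> paired a x y -> paired a x y' -> y = y'.
Proof.
  move=> [phi [_ [_ Hg]]] [i [Hi1 Hi2]] [j [Hj1 Hj2]].
  rewrite -Hi2 -Hj2 -!Hg. congr phi. apply: proj1_sig_inj => /=. by rewrite Hi1 Hj1.
Qed.

Lemma cover_left (P : U1 -> Prop) a : has_EP u2 -> (forall x x', P x -> P x' -> x = x') ->
  approx_ok a -> exists a', approx_ok a' /\ refines a a' /\
    forall x, P x -> exists y, paired a' x y.
Proof.
  move=> HEP Huniq Ha. case: (classic (exists x, P x)) => [[x Hx]|Hn]; last first.
    by exists a; do 2!split => //; move=> x Hx; case: Hn; exists x.
  case: (partial_iso_forth HEP HU1 Hu1 Ha x) => y Hy.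
  exists (approx_add a x y); do 2!split => //; first exact: refines_add.
  move=> x' Hx'. rewrite (Huniq _ _ Hx' Hx). exists y. exact: paired_add.
Qed.

Lemma cover_right (Q : U2 -> Prop) a : has_EP u1 -> (forall y y', Q y -> Q y' -> y = y') ->
  approx_ok a -> exists a', approx_ok a' /\ refines a a' /\
    forall y, Q y -> exists x, paired a' x y.
Proof.
  move=> HEP Huniq Ha. case: (classic (exists y, Q y)) => [[y Hy]|Hn]; last first.
    by exists a; do 2!split => //; move=> y Hy; case: Hn; exists y.
  case: (partial_iso_forth HEP HU2 Hu2 (partial_iso_sym Ha) y) => x Hx.
  exists (approx_add a x y); split; first exact: partial_iso_sym Hx.
  split; first exact: refines_add.
  move=> y' Hy'. rewrite (Huniq _ _ Hy' Hy). exists x. exact: paired_add.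
Qed.

Lemma approx_chain (back : bool) a0 : has_EP u2 -> (back -> has_EP u1) -> approx_ok a0 ->
  exists s : nat -> Approx U1 U2, s 0 = a0 /\ (forall k, approx_ok (s k)) /\
    (forall k, refines (s k) (s k.+1)) /\ (forall x, exists k y, paired (s k) x y) /\
    (back -> forall y, exists k x, paired (s k) x y).
Proof.
  move=> HEP2 HEP1 Ha0.
  case: (HU1) => [[c1 Ic1] _]. case: (HU2) => [[c2 Ic2] _].
  pose R k a a' := approx_ok a -> approx_ok a' /\ refines a a' /\
      (forall x, c1 x = k -> exists y, paired a' x y) /\
      (back -> forall y, c2 y = k -> exists x, paired a' x y).
  have HR : forall k a, exists a', R k a a'.
    move=> k a. case: (classic (approx_ok a)) => [Ha|Hn]; last by exists a.
    case: (cover_left (P := fun x => c1 x = k) HEP2 _ Ha) => [x x' <- /Ic1 //|a1 [H1 [R1 F1]]].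
    case: (classic back) => [Hb|Hnb]; last first.
      by exists a1 => _; do 3!split => //; move=> Hb; case: Hnb.
    case: (cover_right (Q := fun y => c2 y = k) (HEP1 Hb) _ H1) => [y y' <- /Ic2 //|].
    move=> a2 [H2 [R2 F2]]. exists a2 => _; split => //; split; first by move=> x y /R1 /R2.
    split => [x /F1 [y /R2]|_ //]. by exists y.
  case: (choice_seq a0 HR) => s [Hs0 Hs].
  have Hok : forall k, approx_ok (s k) by elim=> [|k IH]; [rewrite Hs0 | case: (Hs k IH)].
  exists s; do 2!split => //.
  split; first by move=> k; case: (Hs k (Hok k)) => _ [].
  split.
  - move=> x. case: (Hs (c1 x) (Hok _)) => _ [_ [F _]]. case: (F x erefl) => y Hy.
    by exists (c1 x).+1, y.
  - move=> Hb y. case: (Hs (c2 y) (Hok _)) => _ [_ [_ F]]. case: (F Hb y erefl) => x Hx.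
    by exists (c2 y).+1, x.
Qed.

Section Limit.
Variable s : nat -> Approx U1 U2.
Hypotheses (Hok : forall k, approx_ok (s k)) (Hstep : forall k, refines (s k) (s k.+1))
  (Htot : forall x, exists k y, paired (s k) x y).

Lemma refines_chain k k' : k <= k' -> refines (s k) (s k').
Proof.
  move/subnKC <-. elim: (k' - k) => [|d IH]; first by rewrite addn0.
  rewrite addnS => x y /IH. exact: Hstep.
Qed.

Lemma limit_exists x : exists y, exists k, paired (s k) x y.
Proof. case: (Htot x) => k [y H]. by exists y, k. Qed.

Definition limit (x : U1) : U2 :=
  proj1_sig (constructive_indefinite_description _ (limit_exists x)).

Lemma limit_spec x : exists k, paired (s k) x (limit x).
Proof. exact: proj2_sig (constructive_indefinite_description _ (limit_exists x)). Qed.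

Lemma limit_paired k x y : paired (s k) x y -> limit x = y.
Proof.
  move=> H. case: (limit_spec x) => k' H'.
  apply: (@paired_fun (s (maxn k k')) x); first exact: Hok.
  - exact: refines_chain (leq_maxr _ _) _ _ H'.
  - exact: refines_chain (leq_maxl _ _) _ _ H.
Qed.

Lemma limit_local a (xs : 'I_a -> U1) : exists M (phi : fg_sub (aleft (s M)) -> U2)
    (av : 'I_a -> fg_sub (aleft (s M))),
    is_emb phi /\ (forall z, u2 (phi z) = u1 (proj1_sig z)) /\
    (forall j, proj1_sig (av j) = xs j) /\ (forall j, phi (av j) = limit (xs j)).
Proof.
  have [M [_ HM]] := @eventually_all a (fun k j => paired (s k) (xs j) (limit (xs j)))
    (fun k k' j Hk => @refines_chain k k' Hk _ _) (fun j => limit_spec (xs j)) 0.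
  case: (Hok M) => phi [Hphi [Hu Hg]].
  have Hav : forall j, exists z, proj1_sig z = xs j /\ phi z = limit (xs j).
    move=> j. case: (HM j) => i [<- <-]. by exists (elt (aleft (s M)) i).
  case: (choice_fun Hav) => av Eav.
  exists M, phi, av; do 2!split => //.
  by split => j; case: (Eav j).
Qed.

Lemma limit_emb : is_emb limit.
Proof.
  have Hrel : forall r xs, srel U1 r xs <-> srel U2 r (fun i => limit (xs i)).
    move=> r xs. case: (limit_local xs) => M [phi [av [[[_ Hp2] [_ Hp3]] [_ [E1 E2]]]]].
    have -> : xs = (fun j => proj1_sig (av j)) by apply: functional_extensionality => j.
    have -> : (fun j => limit (proj1_sig (av j))) = (fun j => phi (av j))
      by apply: functional_extensionality => j; rewrite E1 E2.
    split => [/Hp2|/Hp3] //.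
  split; [split|split]; [|by move=> r xs /Hrel| |by move=> r xs /Hrel].
  - move=> f xs. case: (limit_local (ext xs (sfun U1 f xs)))
      => M [phi [av [[[Hp1 _] _] [_ [E1 E2]]]]].
    have Hmax : av ord_max = sfun _ f (fun j => av (lift ord_max j)).
      apply: proj1_sig_inj; rewrite /= E1 ext_max; congr sfun.
      by apply: functional_extensionality => j; rewrite E1 ext_lift.
    rewrite -(ext_max xs (sfun U1 f xs)) -E2 Hmax Hp1. congr sfun.
    apply: functional_extensionality => j. by rewrite E2 ext_lift.
  - move=> x x'. case: (limit_local (ext (ext (no_gens U1) x) x'))
      => M [phi [av [[_ [Ip _]] [_ [E1 E2]]]]].
    have Ex := E1 (lift ord_max ord_max). have Ex' := E1 ord_max.
    have Ey := E2 (lift ord_max ord_max). have Ey' := E2 ord_max.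
    rewrite ext_lift !ext_max in Ex Ex' Ey Ey'.
    by rewrite -Ey -Ey' -Ex -Ex' => /Ip ->.
Qed.

Lemma limit_commutes x : u2 (limit x) = u1 x.
Proof.
  case: (limit_spec x) => k [i [Hx Hy]]. case: (Hok k) => phi [_ [Hu Hg]].
  by rewrite -Hy -Hg Hu /= Hx.
Qed.

Lemma limit_on_chain k i : limit (aleft (s k) i) = aright (s k) i.
Proof. apply: (@limit_paired k). by exists i. Qed.

Lemma limit_onto : (forall y, exists k x, paired (s k) x y) -> forall y, exists x, limit x = y.
Proof. move=> H y. case: (H y) => k [x Hxy]. exists x. exact: limit_paired Hxy. Qed.

End Limit.
End Approximations.
End BackAndForth.

Section EPConsequences.
Context {L : Signature} (Ccl : @Class L) (T : Structure L).
Hypothesis HCage : age Ccl.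
Implicit Types A B : Structure L.

Theorem back_and_forth (U1 U2 : Structure L) (u1 : U1 -> T) (u2 : U2 -> T) (back : bool)
    n (g1 : 'I_n -> U1) g2 :
  Kbar Ccl U1 -> Kbar Ccl U2 -> is_hom u1 -> is_hom u2 ->
  has_EP Ccl u2 -> (back -> has_EP Ccl u1) -> partial_iso u1 u2 g1 g2 ->
  exists alpha : U1 -> U2, is_emb alpha /\ (forall x, u2 (alpha x) = u1 x) /\
    (forall i, alpha (g1 i) = g2 i) /\ (back -> forall y, exists x, alpha x = y).
Proof.
  move=> HU1 HU2 Hu1 Hu2 HEP2 HEP1 H0.
  have Ha0 : approx_ok u1 u2 {| aleft := g1; aright := g2 |} := H0.
  case: (approx_chain HCage HU1 HU2 Hu1 Hu2 HEP2 HEP1 Ha0)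
    => s [Hs0 [Hok [Hstep [Htot Hback]]]].
  exists (limit Htot); split; first exact: limit_emb Hok Hstep Htot.
  split; first exact: limit_commutes Hok Htot.
  split; last by move=> Hb; apply: limit_onto; [exact: Hok|exact: Hstep|exact: Hback].
  move=> i. have := limit_on_chain Hok Hstep Htot (k := 0). by rewrite Hs0; apply.
Qed.

(* The back-and-forth can be started from the substructures generated by the
   constants: JEP identifies them, and the EP embeds one over T. *)
Lemma partial_iso_start (V : Structure L) (v : V -> T) A (h : A -> T) :
  has_EP Ccl v -> Kbar Ccl V -> Kbar Ccl A -> is_hom v -> is_hom h ->
  partial_iso h v (no_gens A) (no_gens V).
Proof.
  move=> HEP HV HA Hv Hh.
  have HV0 : Ccl (fg_sub (no_gens V)) := Kbar_fg HCage _ HV.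
  have HA0 : Ccl (fg_sub (no_gens A)) := Kbar_fg HCage _ HA.
  case: HCage => _ [_ [_ [_ JEP]]].
  case: (JEP _ _ HV0 HA0) => D [_ [[e1 He1] [e2 He2]]].
  case: (const_sub_factor He1 He2) => m [Hm _].
  have Hhv : is_hom (fun b : fg_sub (no_gens A) => h (proj1_sig b)) :=
    hom_comp (proj1 (val_emb _)) Hh.
  case: (HEP _ _ m (fun b => h (proj1_sig b)) (fun a => proj1_sig a) HV0 HA0 Hm Hhv (val_emb _)).
  - apply: hom_agree_fg; [exact: hom_comp (proj1 (val_emb _)) Hv
                         | exact: hom_comp (proj1 Hm) Hhv | by case].
  - move=> e' [He' [_ Hv']]. by exists e'; do 2!split => //; case.
Qed.

Lemma universal_of_EP (V : Structure L) (v : V -> T) :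
  Kbar Ccl V -> is_hom v -> has_EP Ccl v -> universal_within Ccl v.
Proof.
  move=> HV Hv HEP A h HA Hh.
  case: (back_and_forth (back := false) HA HV Hh Hv HEP (fun F => False_ind _ (notF F))
          (partial_iso_start HEP HV HA Hv Hh)) => alpha [Ha [Hau _]].
  by exists alpha; split => // a; rewrite Hau.
Qed.

Lemma homogeneous_of_EP (V : Structure L) (v : V -> T) :
  Kbar Ccl V -> is_hom v -> has_EP Ccl v -> homogeneous_hom v.
Proof.
  move=> HV Hv HEP n g i Hi Hiu.
  have H0 : partial_iso v v g (fun j => i (elt g j)) by exists i.
  case: (back_and_forth (back := true) HV HV Hv Hv HEP (fun _ => HEP) H0)
    => alpha [Ha [Hau [Hag Hsurj]]].
  exists alpha; split; first by split; [done| exact: Hsurj].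
  split => //. apply: hom_agree_fg => //; last exact: proj1 Hi.
  exact: hom_comp (proj1 (val_emb _)) (proj1 Ha).
Qed.

(* Conversely, universality and homogeneity give the EP: embed B over T by
   universality, then move the image of A back onto e by homogeneity. *)
Lemma EP_of_universal_homogeneous (V : Structure L) (v : V -> T) :
  is_hom v -> universal_within Ccl v -> homogeneous_hom v -> has_EP Ccl v.
Proof.
  move=> Hv Huniv Hhom A B f hB e HA HB Hf HhB He Hcomm.
  case: (Huniv B hB (age_Kbar HCage HB) HhB) => j [Hj Hjv].
  case: (age_fingen HCage HA) => n [gA HgA].
  pose g i := e (gA i).
  have Himg : forall y : fg_sub g, exists a, e a = proj1_sig y.
    move=> y. case: (gen_preimage (proj1 He) (proj2_sig y)) => a [_ E]. by exists a.
  case: (emb_factor He (val_emb _) Himg) => m [Hm Em].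
  pose i y := j (f (m y)).
  have Hi : is_emb i := emb_comp Hm (emb_comp Hf Hj).
  have Hiu : forall y, v (i y) = v (proj1_sig y) by move=> y; rewrite /i -Hjv -Hcomm Em.
  case: (Hhom n g i Hi Hiu) => alpha [Halpha [Hav Hai]].
  case: (iso_inv Halpha) => beta [Hbeta [Hba Hab]].
  exists (fun b => beta (j b)); split; first exact: emb_comp Hj (iso_emb Hbeta).
  split => [a|b]; last by rewrite Hjv -{2}(Hab (j b)) Hav.
  pose y : fg_sub g := exist _ (e a) (gen_hom_image (proj1 He) (HgA a)).
  have Hmy : m y = a by apply: (proj1 (proj2 He)); rewrite Em.
  by rewrite -Hmy -/(i y) -Hai Hba.
Qed.

Lemma unique_of_EP (V W : Structure L) (v : V -> T) (w : W -> T) :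
  Kbar Ccl V -> is_hom v -> has_EP Ccl v -> Kbar Ccl W -> is_hom w -> has_EP Ccl w ->
  exists h : W -> V, is_iso h /\ (forall x, w x = v (h x)).
Proof.
  move=> HV Hv HEPv HW Hw HEPw.
  case: (back_and_forth (back := true) HW HV Hw Hv HEPv (fun _ => HEPw)
          (partial_iso_start HEPv HV HW Hv Hw)) => alpha [Ha [Hau [_ Hsurj]]].
  exists alpha; split; first by split; [done| exact: Hsurj].
  by move=> x; rewrite Hau.
Qed.

End EPConsequences.

Section AmalgamationOverT.
Context {L : Signature} (Ucl Ccl : @Class L) (T : Structure L).
Hypotheses (HU : strict Ucl) (HT : Kbar Ucl T) (HC : fraisse Ccl)
  (HCU : forall A, Ccl A -> Ucl A) (Hfree : free_in Ccl Ucl).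
Implicit Types A B : Structure L.

(* Amalgamation over T inside C: the canonical amalgam E lies in C by
   freeness, T receives E by the pushout property, and the legs into E are
   embeddings because they are followed by the mediating map into a genuine
   amalgam D of C. *)
Lemma amalgamation_over_T A (B1 B2 : Structure L) (f1 : A -> B1) (f2 : A -> B2)
    (h1 : B1 -> T) (h2 : B2 -> T) :
  Ccl A -> Ccl B1 -> Ccl B2 -> is_emb f1 -> is_emb f2 -> is_hom h1 -> is_hom h2 ->
  (forall a, h1 (f1 a) = h2 (f2 a)) ->
  exists (E : Structure L) (g1 : B1 -> E) (g2 : B2 -> E) (hE : E -> T),
    Ccl E /\ is_emb g1 /\ is_emb g2 /\ (forall a, g1 (f1 a) = g2 (f2 a)) /\ is_hom hE /\
    (forall b, hE (g1 b) = h1 b) /\ (forall b, hE (g2 b) = h2 b).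
Proof.
  move=> HA HB1 HB2 Hf1 Hf2 Hh1 Hh2 Hcomm.
  case: HU => [[HUage _] Hstrict].
  case: (Hstrict A B1 B2 f1 f2 (HCU HA) (HCU HB1) (HCU HB2) Hf1 Hf2) => E [g1 [g2 [HE PO]]].
  have HEC : Ccl E := Hfree HA HB1 HB2 Hf1 Hf2 HE PO.
  case: PO => _ [_ [_ [_ [_ [_ [Hg1 [Hg2 [Hgc Hmediate]]]]]]]].
  case: (Hmediate T h1 h2 HT Hh1 Hh2 Hcomm) => m [Hm [Hm1 [Hm2 _]]].
  case: HC => _ HCamalg.
  case: (HCamalg A B1 B2 f1 f2 HA HB1 HB2 Hf1 Hf2) => D [k1 [k2 [HD [Hk1 [Hk2 Hkc]]]]].
  case: (Hmediate D k1 k2 (age_Kbar HUage (HCU HD)) (proj1 Hk1) (proj1 Hk2) Hkc)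
    => m' [Hm' [Hm'1 [Hm'2 _]]].
  exists E, g1, g2, m; split => //.
  split; first exact: emb_of_comp Hg1 Hm' Hk1 Hm'1.
  split; first exact: emb_of_comp Hg2 Hm' Hk2 Hm'2.
  by do 3!split => //.
Qed.

(* Some member of C maps homomorphically to T: the constant substructure of
   any member of C embeds, by JEP in U, into the same structure as the
   constant substructure of T. *)
Lemma C_maps_to_T : exists A (h : A -> T), Ccl A /\ is_hom h.
Proof.
  case: HC => [[[A0 HA0] _] _].
  have HP : Ccl (fg_sub (no_gens A0)) := age_fg_sub (proj1 HC) _ HA0.
  case: HT => _ HTf. case: (HTf 0 (no_gens T)) => BT [HBT [phi Hphi]].
  case: HU => [[[_ [_ [_ [_ JEP]]]] _] _].
  case: (JEP _ _ (HCU HP) HBT) => D [_ [[e1 He1] [e2 He2]]].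
  case: (const_sub_factor He1 (emb_comp (iso_emb Hphi) He2)) => m [Hm _].
  exists (fg_sub (no_gens A0)), (fun x => proj1_sig (m x)); split => //.
  exact: hom_comp (proj1 Hm) (proj1 (val_emb _)).
Qed.

End AmalgamationOverT.

(* Structures whose universe is a subset of nat.  They let the chain of the
   existence proof be a chain of substructures (literal inclusions), whose
   union is again such a structure. *)
Section NatStructures.
Context {L : Signature}.
Implicit Types A B : Structure L.

Local Unset Implicit Arguments.
Record NatStr := MkNatStr {
  ndom : nat -> Prop;
  nrel : forall r : RelSym L, ('I_(rel_ar r) -> nat) -> Prop;
  nfun : forall f : FunSym L, ('I_(fun_ar f) -> nat) -> nat;
  nfun_closed : forall f xs, (forall i, ndom (xs i)) -> ndom (nfun f xs) }.
Local Set Implicit Arguments.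
Arguments nfun_closed n {f xs}.

Definition nstruct (D : NatStr) : Structure L :=
  {| carrier := {x | ndom D x};
     srel := fun r xs => nrel D r (fun i => proj1_sig (xs i));
     sfun := fun f xs => exist _ (nfun D f (fun i => proj1_sig (xs i)))
                               (nfun_closed D (fun i => proj2_sig (xs i))) |}.

Definition nsub (D D' : NatStr) :=
  (forall x, ndom D x -> ndom D' x) /\
  (forall f xs, (forall i, ndom D (xs i)) -> nfun D' f xs = nfun D f xs) /\
  (forall r xs, (forall i, ndom D (xs i)) -> (nrel D' r xs <-> nrel D r xs)).

Lemma nsub_refl D : nsub D D.
Proof. by split; [|split]. Qed.

Lemma nsub_trans D1 D2 D3 : nsub D1 D2 -> nsub D2 D3 -> nsub D1 D3.
Proof.
  move=> [P1 [F1 R1]] [P2 [F2 R2]]; split; last split.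
  - move=> x H. exact: P2 (P1 _ H).
  - move=> f xs H. rewrite F2; first exact: F1. move=> i; exact: P1.
  - move=> r xs H. rewrite R2; first exact: R1. move=> i; exact: P1.
Qed.

Definition ninc D D' (H : nsub D D') : nstruct D -> nstruct D' :=
  fun x => exist _ (proj1_sig x) (proj1 H _ (proj2_sig x)).

Lemma ninc_emb D D' (H : nsub D D') : is_emb (ninc H).
Proof.
  case: (H) => HP [HF HR]. split; [split|split].
  - move=> f xs. apply: proj1_sig_inj => /=. rewrite HF //. move=> i; exact: proj2_sig.
  - move=> r xs /= Hr. apply/HR => //. move=> i; exact: proj2_sig.
  - move=> x y E. apply: proj1_sig_inj. exact: (f_equal (@proj1_sig _ _) E).
  - move=> r xs /= Hr. apply/HR => //. move=> i; exact: proj2_sig.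
Qed.

Definition nlift A D (e : A -> nat) (He : forall a, ndom D (e a)) : A -> nstruct D :=
  fun a => exist _ (e a) (He a).

Lemma natstr_of_inj (E : Structure L) (c : E -> nat) : injective c ->
  exists D : NatStr, exists psi : E -> nstruct D,
    is_iso psi /\ (forall y, proj1_sig (psi y) = c y) /\ (forall z, ndom D z <-> exists y, c y = z).
Proof.
  move=> Ic.
  pose P z := exists y, c y = z.
  pose F f (xs : 'I_(fun_ar f) -> nat) :=
    match decide (forall i, P (xs i)) with
    | left H => c (sfun E f (fun i => proj1_sig (constructive_indefinite_description _ (H i))))
    | right _ => 0 end.
  have HF : forall f xs, (forall i, P (xs i)) -> P (F f xs).
    move=> f xs H. rewrite /F. case: (decide _) => [H'|]; last by case.
    by eexists.
  pose R r (xs : 'I_(rel_ar r) -> nat) := exists ys, (forall i, c (ys i) = xs i) /\ srel E r ys.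
  pose D := MkNatStr P R F HF.
  have Hpsi : forall y, ndom D (c y) by move=> y; exists y.
  exists D, (nlift Hpsi); split; last by split.
  split; last by move=> [z [y Hy]]; exists y; apply: proj1_sig_inj; rewrite /= Hy.
  split; [split|split].
  - move=> f ys. apply: proj1_sig_inj => /=. rewrite /F. case: (decide _) => [H|H]; last first.
      by case: H => i; exists (ys i).
    congr (c (sfun E f _)). apply: functional_extensionality => i.
    apply: Ic. by case: (constructive_indefinite_description _ (H i)).
  - move=> r ys H. by exists ys.
  - move=> x y E'. apply: Ic. exact: (f_equal (@proj1_sig _ _) E').
  - move=> r ys [ys' [H1 H2]].
    by have -> : ys = ys' by apply: functional_extensionality => i; apply: Ic; rewrite H1.
Qed.

Lemma nsub_of_emb (D D' : NatStr) (iota : nstruct D -> nstruct D') :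
  is_emb iota -> (forall x, proj1_sig (iota x) = proj1_sig x) -> nsub D D'.
Proof.
  move=> [[Hf Hr] [_ Hr']] Hval.
  have Hdom : forall z, ndom D z -> ndom D' z.
    move=> z Hz. have <- : proj1_sig (iota (exist _ z Hz)) = z by rewrite Hval.
    exact: proj2_sig.
  have Hi : forall n (xs : 'I_n -> nat) (H : forall i, ndom D (xs i)),
      (fun i => iota (exist _ (xs i) (H i))) = (fun i => exist (ndom D') (xs i) (Hdom _ (H i))).
    by move=> n xs H; apply: functional_extensionality => i; apply: proj1_sig_inj; rewrite Hval.
  split; last split; first exact: Hdom.
  - move=> f xs H. have := f_equal (@proj1_sig _ _) (Hf f (fun i => exist _ (xs i) (H i))).
    by rewrite Hi Hval.
  - move=> r xs H. split => Hrel.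
    + apply: (Hr' r (fun i => exist _ (xs i) (H i))). by rewrite Hi.
    + by have := Hr r (fun i => exist _ (xs i) (H i)) Hrel; rewrite Hi.
Qed.

End NatStructures.

Section ChainUnion.
Local Unset Implicit Arguments.
Context {L : Signature} (T : Structure L) (D : nat -> @NatStr L)
  (h : forall k, nstruct (D k) -> T).
Hypotheses (Hsub : forall k, nsub (D k) (D k.+1))
  (Hh : forall k x, h k.+1 (ninc (Hsub k) x) = h k x)
  (Hhom : forall k, is_hom (h k)).
Local Set Implicit Arguments.

Lemma nsub_chain k k' : k <= k' -> nsub (D k) (D k').
Proof.
  move/subnKC <-. elim: (k' - k) => [|d IH]; first by rewrite addn0; exact: nsub_refl.
  rewrite addnS. exact: nsub_trans IH (Hsub _).
Qed.

Lemma ndom_chain k k' z : k <= k' -> ndom (D k) z -> ndom (D k') z.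
Proof. move=> H. exact: (proj1 (nsub_chain H)). Qed.

Lemma h_chain k k' (H : nsub (D k) (D k')) x : k <= k' -> h k' (ninc H x) = h k x.
Proof.
  move/subnK => E. move: (k' - k) E H => d <-. elim: d => [|d IH] H /=.
  - congr (h k). exact: proj1_sig_inj.
  - have H' : nsub (D k) (D (d + k)) := nsub_chain (leq_addl d k).
    rewrite -(IH H') -(Hh (d + k) (ninc H' x)). congr (h _). exact: proj1_sig_inj.
Qed.

Lemma common_stage a (xs : 'I_a -> nat) : (forall i, exists k, ndom (D k) (xs i)) ->
  forall m, exists k, m <= k /\ forall i, ndom (D k) (xs i).
Proof. move=> H m. apply: eventually_all => // k k' i Hk. exact: ndom_chain. Qed.

Definition stage_of a (xs : 'I_a -> nat) : nat :=
  match decide (exists k, forall i, ndom (D k) (xs i)) with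
  | left H => proj1_sig (constructive_indefinite_description _ H) | right _ => 0 end.

Lemma stage_ofP a (xs : 'I_a -> nat) : (exists k, forall i, ndom (D k) (xs i)) ->
  forall i, ndom (D (stage_of xs)) (xs i).
Proof.
  move=> H. rewrite /stage_of. case: (decide _) => [H'|]; last by [].
  exact: proj2_sig (constructive_indefinite_description _ H').
Qed.

Definition udom z := exists k, ndom (D k) z.
Definition ufun f (xs : 'I_(fun_ar f) -> nat) := nfun (D (stage_of xs)) f xs.
Definition urel r (xs : 'I_(rel_ar r) -> nat) :=
  exists k, (forall i, ndom (D k) (xs i)) /\ nrel (D k) r xs.
Arguments ufun : clear implicits.
Arguments urel : clear implicits.

Lemma ufun_eq k f xs : (forall i, ndom (D k) (xs i)) -> ufun f xs = nfun (D k) f xs.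
Proof.
  move=> H. have HS := stage_ofP (ex_intro _ k H).
  rewrite /ufun. set K := stage_of xs in HS *.
  rewrite -(proj1 (proj2 (nsub_chain (leq_maxr k K))) f xs HS).
  exact: (proj1 (proj2 (nsub_chain (leq_maxl k K))) f xs H).
Qed.

Lemma urel_eq k r xs : (forall i, ndom (D k) (xs i)) -> (urel r xs <-> nrel (D k) r xs).
Proof.
  move=> H. split; last by exists k.
  move=> [K [HK HR]].
  apply/(proj2 (proj2 (nsub_chain (leq_maxl k K))) r xs H).
  exact/(proj2 (proj2 (nsub_chain (leq_maxr k K))) r xs HK).
Qed.

Lemma ufun_closed f xs : (forall i, udom (xs i)) -> udom (ufun f xs).
Proof.
  move=> H. case: (common_stage H 0) => k [_ Hk].
  exists k. rewrite (ufun_eq Hk). exact: nfun_closed.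
Qed.

Definition nunion : @NatStr L := MkNatStr udom urel ufun ufun_closed.

Lemma nsub_union k : nsub (D k) nunion.
Proof.
  split; last split.
  - move=> z Hz. by exists k.
  - move=> f xs H. exact: ufun_eq.
  - move=> r xs H. exact: urel_eq.
Qed.

Definition union := nstruct nunion.

Definition stage_of_elt (x : union) : nat :=
  proj1_sig (constructive_indefinite_description _ (proj2_sig x)).

Lemma stage_of_eltP (x : union) : ndom (D (stage_of_elt x)) (proj1_sig x).
Proof. exact: proj2_sig (constructive_indefinite_description _ (proj2_sig x)). Qed.

Definition union_map (x : union) : T :=
  h (stage_of_elt x) (exist _ (proj1_sig x) (stage_of_eltP x)).

Lemma union_map_incl k x : union_map (ninc (nsub_union k) x) = h k x.
Proof.
  rewrite /union_map. set K := stage_of_elt _. set HK := stage_of_eltP _.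
  rewrite -(h_chain (nsub_chain (leq_maxl k K)) x (leq_maxl k K)).
  rewrite -(h_chain (nsub_chain (leq_maxr k K)) _ (leq_maxr k K)).
  congr (h _). exact: proj1_sig_inj.
Qed.

Lemma union_stage n (xs : 'I_n -> union) m :
  exists k, m <= k /\ forall i, ndom (D k) (proj1_sig (xs i)).
Proof. apply: common_stage => i. exact: proj2_sig (xs i). Qed.

Lemma union_tuple_at k n (xs : 'I_n -> union) (H : forall i, ndom (D k) (proj1_sig (xs i))) :
  xs = fun i => ninc (nsub_union k) (exist _ (proj1_sig (xs i)) (H i)).
Proof. apply: functional_extensionality => i. exact: proj1_sig_inj. Qed.

Lemma union_map_hom : is_hom union_map.
Proof.
  have He := fun k => ninc_emb (nsub_union k).
  split.
  - move=> f xs. case: (union_stage xs 0) => k [_ H].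
    rewrite (union_tuple_at H) -(proj1 (proj1 (He k))) union_map_incl (proj1 (Hhom k)).
    congr (sfun _ _ _). apply: functional_extensionality => i. by rewrite union_map_incl.
  - move=> r xs Hr. case: (union_stage xs 0) => k [_ H].
    rewrite (union_tuple_at H) in Hr *.
    have := proj2 (Hhom k) _ _ (proj2 (proj2 (He k)) _ _ Hr).
    by have -> : (fun i => h k (exist (ndom (D k)) (proj1_sig (xs i)) (H i))) =
              (fun i => union_map (ninc (nsub_union k) (exist _ (proj1_sig (xs i)) (H i))))
      by apply: functional_extensionality => i; rewrite union_map_incl.
Qed.

Lemma union_countable : countable union.
Proof. exists (fun x => proj1_sig x) => x y E. exact: proj1_sig_inj. Qed.

Lemma union_gen_at k n (g : 'I_n -> union) : (forall i, ndom (D k) (proj1_sig (g i))) ->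
  forall y, gen g y -> exists x, ninc (nsub_union k) x = y.
Proof.
  move=> H y Hy. apply: (gen_in_image (proj1 (ninc_emb (nsub_union k)))) Hy => i.
  exists (exist _ _ (H i)). exact: proj1_sig_inj.
Qed.

End ChainUnion.

Section Construction.
Context {L : Signature} (Ucl Ccl : @Class L) (T : Structure L).
Hypotheses (HU : strict Ucl) (HT : Kbar Ucl T) (HC : fraisse Ccl)
  (HCU : forall A, Ccl A -> Ucl A) (Hfree : free_in Ccl Ucl).
Implicit Types A B : Structure L.

Let HCage : age Ccl := proj1 HC.

(* Elements added at stage m of the chain are coded as pairs (m, c); a
   structure is bounded by m if it only uses codes of stages below m. *)
Definition code (l c : nat) : nat := pickle (l, c).

Lemma code_inj l c l' c' : code l c = code l' c' -> l = l' /\ c = c'.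
Proof. by move/(pcan_inj pickleK) => [-> ->]. Qed.

Definition bounded (m : nat) (D : @NatStr L) :=
  forall z, ndom D z -> exists l c, l < m /\ z = code l c.

(* A countable E extending D (via j) can be coded by keeping the codes of D and
   giving the new elements fresh codes of level m. *)
Lemma extend_coding m (D : @NatStr L) (E : Structure L) (j : nstruct D -> E) :
  bounded m D -> countable E -> injective j ->
  exists c : E -> nat, injective c /\ (forall x, c (j x) = proj1_sig x) /\
    forall y, exists l c', l < m.+1 /\ c y = code l c'.
Proof.
  move=> HB [cE IcE] Ij.
  pose c y := match decide (exists x, j x = y) with
              | left H => proj1_sig (proj1_sig (constructive_indefinite_description _ H))
              | right _ => code m (cE y) end.
  have Hcj : forall x, c (j x) = proj1_sig x.
    move=> x. rewrite /c. case: (decide _) => [H|H]; last by case: H; exists x.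
    case: (constructive_indefinite_description _ H) => x' Ex /=. by rewrite (Ij _ _ Ex).
  have Hold : forall y (H : exists x, j x = y), exists x, c y = proj1_sig x /\ j x = y.
    by move=> y [x <-]; exists x; rewrite Hcj.
  have Hnew : forall y, ~ (exists x, j x = y) -> c y = code m (cE y).
    by move=> y Hn; rewrite /c; case: (decide _).
  have Hlow : forall (x : nstruct D) l c', proj1_sig x = code l c' -> l < m.
    move=> x l c' Ex. case: (HB _ (proj2_sig x)) => l' [c'' [Hl Ez]].
    by move: Ex; rewrite Ez => /code_inj [<- _].
  exists c; split; last split => //.
  - move=> y y'.
    case: (classic (exists x, j x = y)) => [/Hold [x [-> <-]]|/Hnew ->];
    case: (classic (exists x, j x = y')) => [/Hold [x' [-> <-]]|/Hnew ->].
    + by move=> /proj1_sig_inj ->.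
    + by move/Hlow; rewrite ltnn.
    + by move/esym/Hlow; rewrite ltnn.
    + by move/code_inj => [_ /IcE ->].
  - move=> y. case: (classic (exists x, j x = y)) => [/Hold [x [-> _]]|/Hnew ->].
    + case: (HB _ (proj2_sig x)) => l [c' [Hl Ez]]. exists l, c'. by rewrite ltnS ltnW.
    + by exists m, (cE y).
Qed.

Local Unset Implicit Arguments.
Record Stage := MkStage { sdom : @NatStr L; smap : nstruct sdom -> T }.
Local Set Implicit Arguments.

Definition stage_ok k (st : Stage) :=
  Ccl (nstruct (sdom st)) /\ is_hom (smap st) /\ bounded k.+1 (sdom st).

Definition stage_le (st st' : Stage) :=
  exists H : nsub (sdom st) (sdom st'), forall x, smap st' (ninc H x) = smap st x.

Lemma realize_extension m (st : Stage) (E : Structure L) (j : nstruct (sdom st) -> E)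
    (hE : E -> T) :
  bounded m (sdom st) -> Ccl E -> is_emb j -> is_hom hE -> (forall x, hE (j x) = smap st x) ->
  exists (st' : Stage) (psi : E -> nstruct (sdom st')),
    is_iso psi /\ (forall x, proj1_sig (psi (j x)) = proj1_sig x) /\
    (forall y, smap st' (psi y) = hE y) /\ stage_le st st' /\
    Ccl (nstruct (sdom st')) /\ is_hom (smap st') /\ bounded m.+1 (sdom st').
Proof.
  move=> HB HE Hj HhE Hjh.
  case: (extend_coding HB (fingen_countable (age_fingen HCage HE)) (proj1 (proj2 Hj)))
    => c [Ic [Hcj Hcb]].
  case: (natstr_of_inj Ic) => D' [psi [Hpsi [Hpv HP']]].
  case: (iso_inv Hpsi) => psii [Hpsii [Hpp1 Hpp2]].
  have Hpj : forall x, proj1_sig (psi (j x)) = proj1_sig x by move=> x; rewrite Hpv Hcj.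
  have Hsub : nsub (sdom st) D' := nsub_of_emb (emb_comp Hj (iso_emb Hpsi)) Hpj.
  exists (MkStage D' (fun x => hE (psii x))), psi; split => //; split => //.
  split; first by move=> y /=; rewrite Hpp1.
  split.
    exists Hsub => x /=. have -> : ninc Hsub x = psi (j x) by apply: proj1_sig_inj; rewrite Hpj.
    by rewrite Hpp1 Hjh.
  split; first by apply: (age_iso HCage HE Hpsi).
  split; first exact: hom_comp (proj1 (iso_emb Hpsii)) HhE.
  move=> z /HP' [y <-]. exact: Hcb.
Qed.

Lemma initial_stage : exists st, stage_ok 0 st.
Proof.
  case: (C_maps_to_T HU HT HC HCU) => A [h [HA Hh]].
  case: (fingen_countable (age_fingen HCage HA)) => cA IcA.
  have Ic : injective (fun y => code 0 (cA y)) by move=> y y' /code_inj [_ /IcA].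
  case: (natstr_of_inj Ic) => D [psi [Hpsi [_ HP]]].
  case: (iso_inv Hpsi) => psii [Hpsii _].
  exists (MkStage D (fun x => h (psii x))); split; first by apply: (age_iso HCage HA Hpsi).
  split; first exact: hom_comp (proj1 (iso_emb Hpsii)) Hh.
  move=> z /HP [y <-]. by exists 0, (cA y).
Qed.

Definition ctype : nat -> Structure L :=
  proj1_sig (constructive_indefinite_description _ (proj1 (proj2 (proj2 HCage)))).

Lemma ctype_spec A : Ccl A -> exists n, isomorphic A (ctype n).
Proof.
  exact: (proj2_sig (constructive_indefinite_description _ (proj1 (proj2 (proj2 HCage))))).
Qed.

Definition ctype_code (j : nat) : ctype j -> nat :=
  match decide (countable (ctype j)) with
  | left H => proj1_sig (constructive_indefinite_description _ H)
  | right _ => fun _ => 0 end.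

Lemma ctype_code_inj j : countable (ctype j) -> injective (@ctype_code j).
Proof.
  rewrite /ctype_code => H. case: (decide _) => [H'|//].
  exact: proj2_sig (constructive_indefinite_description _ H').
Qed.

Definition ctype_gens_sig (j : nat) : {n : nat & 'I_n -> ctype j} :=
  match decide (fingen (ctype j)) with
  | left H => existT _ (proj1_sig (constructive_indefinite_description _ H))
      (proj1_sig (constructive_indefinite_description _
        (proj2_sig (constructive_indefinite_description _ H))))
  | right _ => existT _ 0 (no_gens _) end.
Definition ctype_ngens j := projT1 (ctype_gens_sig j).
Definition ctype_gens j : 'I_(ctype_ngens j) -> ctype j := projT2 (ctype_gens_sig j).

Lemma ctype_gensP j : fingen (ctype j) -> forall x, gen (@ctype_gens j) x.
Proof.
  rewrite /ctype_gens /ctype_ngens /ctype_gens_sig => H. case: (decide _) => [H'|//] /=.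
  case: (constructive_indefinite_description _ H') => n Hn /=.
  by case: (constructive_indefinite_description _ Hn).
Qed.

Definition T_code : T -> nat := proj1_sig (constructive_indefinite_description _ (proj1 HT)).

Lemma T_code_inj : injective T_code.
Proof. exact: proj2_sig (constructive_indefinite_description _ (proj1 HT)). Qed.

(* An extension task: a square A --f--> B, B --hB--> T, with A mapped into
   the chain by the values e (on nat); B comes with an isomorphism to its
   representative type. *)
Local Unset Implicit Arguments.
Record Task := MkTask {
  tA : Structure L; tB : Structure L; tn : nat; tgens : 'I_tn -> tA; tf : tA -> tB;
  thB : tB -> T; te : tA -> nat; tj : nat; tpsi : tB -> ctype tj; tpsii : ctype tj -> tB }.
Local Set Implicit Arguments.

Definition task_posed (st : Stage) (t : Task) :=
  Ccl (tA t) /\ Ccl (tB t) /\ (forall x, gen (tgens t) x) /\ is_emb (tf t) /\ is_hom (thB t) /\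
  is_iso (tpsi t) /\ is_iso (tpsii t) /\ (forall b, tpsii t (tpsi t b) = b) /\
  (forall s, tpsi t (tpsii t s) = s) /\
  exists He : forall a, ndom (sdom st) (te t a),
    is_emb (nlift He) /\ forall a, smap st (nlift He a) = thB t (tf t a).

Definition task_solved (st : Stage) (t : Task) :=
  exists (e : tB t -> nat) (He : forall b, ndom (sdom st) (e b)),
    is_emb (nlift He) /\ (forall a, e (tf t a) = te t a) /\
    (forall b, smap st (nlift He b) = thB t b).

(* A finite description of a task, determining it up to isomorphism over the
   chain: the values of e on the generators of A, the type of B, the images of
   the generators of A in the representative, and hB on its generators. *)
Definition task_key (t : Task) : nat :=
  pickle ((([seq te t (tgens t i) | i <- enum 'I_(tn t)], tj t),
           [seq ctype_code (tpsi t (tf t (tgens t i))) | i <- enum 'I_(tn t)]),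
           [seq T_code (thB t (tpsii t (ctype_gens l))) | l <- enum 'I_(ctype_ngens (tj t))]).

Lemma map_enum_inj (X : eqType) n (f1 f2 : 'I_n -> X) :
  [seq f1 i | i <- enum 'I_n] = [seq f2 i | i <- enum 'I_n] -> forall i, f1 i = f2 i.
Proof. move/eq_in_map => H i. apply: H. by rewrite mem_enum. Qed.

(* Tasks with the same key posed at a stage are solved together: a solution
   e3 of t' yields the solution e3 o psii' o psi of t, and equality of keys
   makes it agree with t on the generators of A and of the type of B. *)
Lemma task_transfer (st st' : Stage) (t t' : Task) :
  stage_le st st' -> is_hom (smap st') -> task_posed st t -> task_posed st t' ->
  task_key t = task_key t' -> task_solved st' t' -> task_solved st' t.
Proof.
  case: t => A B n gA f hB e j psi psii.
  case: t' => A' B' n' gA' f' hB' e' j' psi' psii'.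
  rewrite /task_posed /task_solved /task_key /=.
  move=> [Hle Hsh] Hsh' [HA [HB [HgA [Hf [HhB [Hpsi [Hpsii [Hpp1 [Hpp2 [He [Hee Hec]]]]]]]]]]]
         [HA' [HB' [HgA' [Hf' [HhB' [Hpsi' [Hpsii' [Hpp1' [Hpp2' [He' [Hee' Hec']]]]]]]]]]].
  move/(pcan_inj pickleK) => [E1 Ej E2 E3].
  have En : n = n' by move: (f_equal size E1); rewrite !size_map -!enumT !size_enum_ord.
  subst n' j'.
  move: E1 E2 E3 => /map_enum_inj E1 /map_enum_inj E2 /map_enum_inj E3.
  move=> [e3 [He3 [Hemb3 [Hf3 Hh3]]]].
  have HSj : Ccl (ctype j) by apply: (age_iso HCage HB Hpsi).
  have Icj := ctype_code_inj (fingen_countable (age_fingen HCage HSj)).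
  have He2 : forall b, ndom (sdom st') (e3 (psii' (psi b))) by move=> b; exact: He3.
  exists (fun b => e3 (psii' (psi b))), He2.
  have Hl2 : nlift He2 = fun b => nlift He3 (psii' (psi b)).
    apply: functional_extensionality => b. exact: proj1_sig_inj.
  have Hemb2 : is_emb (nlift He2).
    rewrite Hl2. exact: emb_comp (iso_emb Hpsi) (emb_comp (iso_emb Hpsii') Hemb3).
  split => //; split.
  - move=> a. have := hom_agree_gen (hom_comp (proj1 Hf) (proj1 Hemb2))
      (hom_comp (proj1 Hee) (proj1 (ninc_emb Hle))) _ (HgA a).
    move=> H. apply: (f_equal (@proj1_sig _ _) (H _)) => i.
    apply: proj1_sig_inj => /=. rewrite (Icj _ _ (E2 i)) Hpp1' Hf3. exact: (esym (E1 i)).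
  - have Hgen : forall b, gen (fun l => psii (ctype_gens l)) b.
      move=> b. rewrite -(Hpp1 b). apply: gen_hom_image (proj1 (iso_emb Hpsii)) _.
      apply: ctype_gensP. by apply: (age_fingen HCage HSj).
    move=> b. apply: (hom_agree_gen (hom_comp (proj1 Hemb2) Hsh') HhB _ (Hgen b)) => l.
    rewrite Hl2 Hpp2 Hh3. apply: T_code_inj. exact: (esym (E3 l)).
Qed.

(* One task is solved by amalgamating B with the current stage over A and T,
   and realizing the amalgam as the next stage. *)
Lemma solve_task k (st : Stage) (tau : Task) : stage_ok k st -> task_posed st tau ->
  exists st', stage_ok k.+1 st' /\ stage_le st st' /\ task_solved st' tau.
Proof.
  move=> [HDc [Hsh HBd]] Hposed.
  move: (Hposed) => [HA [HB [_ [Hf [HhB [_ [_ [_ [_ [He [Hee Hec]]]]]]]]]]].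
  case: (amalgamation_over_T HU HT HC HCU Hfree HA HDc HB Hee Hf Hsh HhB Hec)
    => E [g1 [g2 [hE [HE [Hg1 [Hg2 [Hgc [HhE [HhE1 HhE2]]]]]]]]].
  case: (realize_extension HBd HE Hg1 HhE HhE1)
    => st' [psi [Hpsi [Hpsj [Hpsh [Hle [HD'c [Hsh' HB']]]]]]].
  exists st'; do 2!split => //.
  have He2 : forall b, ndom (sdom st') (proj1_sig (psi (g2 b))) by move=> b; exact: proj2_sig.
  exists (fun b => proj1_sig (psi (g2 b))), He2.
  have -> : nlift He2 = fun b => psi (g2 b).
    by apply: functional_extensionality => b; exact: proj1_sig_inj.
  split; first exact: emb_comp Hg2 (iso_emb Hpsi).
  split => [a|b]; last by rewrite Hpsh HhE2.
  by rewrite -Hgc Hpsj.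
Qed.

Lemma stage_step k (st : Stage) (key : nat) : stage_ok k st ->
  exists st', stage_ok k.+1 st' /\ stage_le st st' /\
    forall tau, task_posed st tau -> task_key tau = key -> task_solved st' tau.
Proof.
  move=> Hok. case: (classic (exists tau, task_posed st tau /\ task_key tau = key))
    => [[tau' [Hv' Hk']]|Hn]; last first.
  - exists st; split.
      case: Hok => [HDc [Hsh HBd]]; do 2!split => //.
      move=> z /HBd [l [c [Hl E]]]. exists l, c; split => //. exact: ltnW.
    split; last by move=> tau Hv Hk; case: Hn; exists tau.
    exists (nsub_refl _) => x. congr (smap st). exact: proj1_sig_inj.
  - case: (solve_task Hok Hv') => st' [Hok' [Hle Hsol]].
    exists st'; do 2!split => //.
    move=> tau Hv Hk. apply: (task_transfer Hle (proj1 (proj2 Hok')) Hv Hv') => //.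
    by rewrite Hk Hk'.
Qed.

(* Tasks are scheduled along a Cantor enumeration of pairs, so that every key
   is handled at arbitrarily late stages. *)
Definition schedule (k : nat) : nat := (Cantor.of_nat k).2.

Lemma schedule_late k0 key : exists k, k0 <= k /\ schedule k = key.
Proof.
  exists (Cantor.to_nat (k0, key)); split; last by rewrite /schedule Cantor.cancel_of_to.
  apply/leP. have := Cantor.to_nat_non_decreasing k0 key. lia.
Qed.

Lemma stage_chain : exists s : nat -> Stage,
  (forall k, stage_ok k (s k)) /\ (forall k, stage_le (s k) (s k.+1)) /\
  (forall k tau, task_posed (s k) tau -> task_key tau = schedule k -> task_solved (s k.+1) tau).
Proof.
  case: initial_stage => st0 Hst0.
  pose R k st st' := stage_ok k st -> stage_ok k.+1 st' /\ stage_le st st' /\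
    (forall tau, task_posed st tau -> task_key tau = schedule k -> task_solved st' tau).
  have HR : forall k st, exists st', R k st st'.
    move=> k st. case: (classic (stage_ok k st)) => [Hi|Hn]; last by exists st.
    case: (stage_step (schedule k) Hi) => st' Hst'. by exists st'.
  case: (choice_seq st0 HR) => s [Hs0 Hs].
  have Hok : forall k, stage_ok k (s k) by elim=> [|k IH]; [rewrite Hs0 | case: (Hs k IH)].
  exists s; split => //.
  by split => k; case: (Hs k (Hok k)) => _ [].
Qed.

Section ChainLimit.
Variable s : nat -> Stage.
Hypotheses (Hok : forall k, stage_ok k (s k)) (Hle : forall k, stage_le (s k) (s k.+1))
  (Hsolved : forall k tau, task_posed (s k) tau -> task_key tau = schedule k ->
     task_solved (s k.+1) tau).

Definition chain_sub k : nsub (sdom (s k)) (sdom (s k.+1)) :=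
  proj1_sig (constructive_indefinite_description _ (Hle k)).

Lemma chain_map k x : smap (s k.+1) (ninc (chain_sub k) x) = smap (s k) x.
Proof. exact: (proj2_sig (constructive_indefinite_description _ (Hle k))). Qed.

Definition chain_union : Structure L := union chain_sub.

Definition chain_union_map : chain_union -> T :=
  @union_map L T _ (fun k => smap (s k)) chain_sub.

Lemma chain_union_hom : is_hom chain_union_map.
Proof. apply: union_map_hom chain_map _ => k. exact: proj1 (proj2 (Hok k)). Qed.

(* Finitely generated substructures of the union lie in some stage, which is
   in C. *)
Lemma chain_union_Kbar : Kbar Ccl chain_union.
Proof.
  split; first exact: union_countable.
  move=> n g. case: (union_stage g 0) => k [_ Hk].
  have Himg : forall y : fg_sub g, exists x, ninc (nsub_union chain_sub k) x = proj1_sig y.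
    move=> y. apply: (union_gen_at Hk). exact: (proj2_sig y).
  case: (emb_factor (ninc_emb (nsub_union chain_sub k)) (val_emb _) Himg) => m [Hm _].
  exists (fg_sub g); split; last by exists id; exact: iso_id.
  by apply: (age_emb HCage (proj1 (Hok k)) (fingen_fg g) Hm).
Qed.

(* An extension square for the union is posed, as a task, at some stage after
   the one containing the image of A and scheduled for its key; it is then
   solved at the next stage. *)
Lemma chain_union_EP : has_EP Ccl chain_union_map.
Proof.
  move=> A B f hB e HA HB Hf HhB He Hcomm.
  case: (age_fingen HCage HA) => n [gA HgA].
  case: (union_stage (fun i => e (gA i)) 0) => k0 [_ Hk0].
  have Hin : forall a, ndom (sdom (s k0)) (proj1_sig (e a)).
    move=> a. case: (union_gen_at Hk0 (gen_hom_image (proj1 He) (HgA a))) => x <-.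
    exact: (proj2_sig x).
  case: (ctype_spec HB) => j [psi Hpsi]. case: (iso_inv Hpsi) => psii [Hpsii [Hpp1 Hpp2]].
  pose tau := MkTask A B n gA f hB (fun a => proj1_sig (e a)) j psi psii.
  case: (schedule_late k0 (task_key tau)) => k [Hk Hsk].
  have He' : forall a, ndom (sdom (s k)) (proj1_sig (e a)).
    by move=> a; exact: (ndom_chain (D := fun k => sdom (s k)) chain_sub Hk (Hin a)).
  have Hincl : forall a, ninc (nsub_union chain_sub k) (nlift He' a) = e a.
    by move=> a; exact: proj1_sig_inj.
  have Hlift : is_emb (nlift He').
    have Hh := hom_of_emb_comp (ninc_emb (nsub_union chain_sub k)) (proj1 He) Hincl.
    exact: emb_of_comp Hh (proj1 (ninc_emb _)) He Hincl.
  have Hposed : task_posed (s k) tau.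
    do 9!(split; first done). exists He'; split => // a /=.
    by rewrite -Hcomm -Hincl /chain_union_map union_map_incl //; exact: chain_map.
  case: (Hsolved Hposed (esym Hsk)) => e2 [He2 [Hemb2 [Hf2 Hh2]]].
  exists (fun b => ninc (nsub_union chain_sub k.+1) (nlift He2 b)); split.
    exact: emb_comp Hemb2 (ninc_emb _).
  split => [a|b]; first by apply: proj1_sig_inj => /=; exact: Hf2.
  rewrite /chain_union_map union_map_incl; [exact: Hh2 | exact: chain_map].
Qed.

End ChainLimit.

Theorem EP_hom_exists : exists (U : Structure L) (u : U -> T),
  Kbar Ccl U /\ is_hom u /\ has_EP Ccl u.
Proof.
  case: stage_chain => s [Hok [Hle Hsolved]].
  exists (chain_union Hle), (@chain_union_map s Hle); split; first exact: chain_union_Kbar.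
  split; [exact: chain_union_hom | exact: chain_union_EP].
Qed.

End Construction.

Theorem theorem3p3 (L : Signature) (Ucl Ccl : @Class L) (T : Structure L) :
  strict Ucl -> Kbar Ucl T ->
  fraisse Ccl -> (forall A, Ccl A -> Ucl A) -> free_in Ccl Ucl ->
  exists (U : Structure L) (u : U -> T),
    Kbar Ccl U /\ is_hom u /\ universal_within Ccl u /\ homogeneous_hom u /\
    (forall (Uh : Structure L) (uh : Uh -> T),
       Kbar Ccl Uh -> is_hom uh -> universal_within Ccl uh -> homogeneous_hom uh ->
       exists h : Uh -> U, is_iso h /\ (forall x, uh x = u (h x))).
Proof.
  move=> HU HT HC HCU Hfree.
  have HCage : age Ccl := proj1 HC.
  case: (EP_hom_exists HU HT HC HCU Hfree) => U [u [HUk [Hu HEP]]].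
  exists U, u; split => //; split => //.
  split; first exact: (universal_of_EP HCage HUk Hu HEP).
  split; first exact: (homogeneous_of_EP HCage HUk Hu HEP).
  move=> Uh uh HUh Huh Huniv Hhomog.
  have HEPh := EP_of_universal_homogeneous HCage Huh Huniv Hhomog.
  exact: (unique_of_EP HCage HUk Hu HEP HUh Huh HEPh).
Qed.
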